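(* Consider the two-user two-hop MAC with AF relays under individual power constraints as in the context, and let $\mathcal R_{opt}$ be its optimal AF rate region. (a) If the upper-layer noise dominates, i.e. $W(\mathbf B^{(2)})\ge W(\mathbf B^{(1i)})\ge1$ for $i=0,1,2$, then the region $\mathcal Q=\mathrm{cl}\,\mathrm{conv}\big(\mathcal R(\mathbf B^{(10)})\cup\mathcal R(\mathbf B^{(11)})\cup\mathcal R(\mathbf B^{(12)})\big)$ satisfies $\max_{\mathcal Q}R_1\ge\max_{\mathcal R_{opt}}R_1-\frac12$, $\max_{\mathcal Q}R_2\ge\max_{\mathcal R_{opt}}R_2-\frac12$ and $\max_{\mathcal Q}(R_1+R_2)\ge\max_{\mathcal R_{opt}}(R_1+R_2)-\frac12$. (b) If the lower-layer noise dominates, i.e. $1\ge W(\mathbf B^{(2)})\ge W(\mathbf B^{(1i)})$ for $i=0,1,2$, then the same three inequalities hold with $\mathcal Q=\mathcal R(\mathbf B^{(2)})$.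
   Context: Two sources $S_1,S_2$ with Gaussian inputs of powers $P_{S_1},P_{S_2}>0$, $n$ relays, one destination. Relay $k$ receives $y_k=h_{S_1,k}x_{S_1}+h_{S_2,k}x_{S_2}+z_k$ and sends $\beta_ky_k$; the destination receives $y_D=\mathbf h_1^T\mathbf B\mathbf h_{01}x_{S_1}+\mathbf h_1^T\mathbf B\mathbf h_{02}x_{S_2}+\mathbf h_1^T\mathbf B\mathbf z_1+z_D$, with $\mathbf h_{0i}=(h_{S_i,k})_k$, $\mathbf h_1=(h_{k,D})_k$ positive, $\mathbf B=\mathrm{diag}(\beta_k)$ real, noises i.i.d. $\mathcal N(0,1)$. $\mathbf B$ is feasible if $|\beta_k|\le\beta_k^{Up}:=\sqrt{P_k^{Up}/(1+h_{S_1,k}^2P_{S_1}+h_{S_2,k}^2P_{S_2})}$. Let $\mathcal C(x)=\frac12\log_2(1+x)$, $\mathbf A=P_{S_1}\mathbf h_{01}\mathbf h_{01}^T+P_{S_2}\mathbf h_{02}\mathbf h_{02}^T$, $W(\mathbf B)=\mathbf h_1^T\mathbf B^2\mathbf h_1$. $\mathcal R(\mathbf B)$ is the set of $(R_1,R_2)\ge0$ with $R_1\le\mathcal C\big((\mathbf h_1^T\mathbf B\mathbf h_{01})^2P_{S_1}/(W(\mathbf B)+1)\big)$, $R_2\le\mathcal C\big((\mathbf h_1^T\mathbf B\mathbf h_{02})^2P_{S_2}/(W(\mathbf B)+1)\big)$, $R_1+R_2\le\mathcal C\big(\mathbf h_1^T\mathbf B\mathbf A\mathbf B\mathbf h_1/(W(\mathbf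 B)+1)\big)$; $\mathcal R_{opt}$ is the closure of the convex hull of $\bigcup_{\mathbf B\text{ feasible}}\mathcal R(\mathbf B)$ (time sharing). Let $P_i=\|\mathbf h_{0i}\|^2P_{S_i}$; fix orthonormal $\mathbf u_1,\mathbf u_2$ and $0\le\alpha\le\beta\le\pi/2$ with $\mathbf h_{0i}/\|\mathbf h_{0i}\|$ equal to $\cos\alpha\,\mathbf u_1+\sin\alpha\,\mathbf u_2$ and $\cos\beta\,\mathbf u_1+\sin\beta\,\mathbf u_2$ respectively; let $\phi(\theta)=P_1\cos^2(\theta-\alpha)+P_2\cos^2(\theta-\beta)$ and $\theta_s$ a maximizer of $\phi$ on $[\alpha,\beta]$. For $\theta$, let $\mathbf x_\theta=\cos\theta\,\mathbf u_1+\sin\theta\,\mathbf u_2$ and $\mathbf B_\theta=\mathrm{diag}(c\,x_{\theta,k}/h_{k,D})$ with $c=\min_{k:x_{\theta,k}\ne0}\beta_k^{Up}h_{k,D}/|x_{\theta,k}|$ (feasible, at least one gain at its bound). Set $\mathbf B^{(10)}=\mathbf B_{\theta_s}$, $\mathbf B^{(11)}=\mathbf B_\alpha$, $\mathbf B^{(12)}=\mathbf B_\beta$, and $\mathbf B^{(2)}=\mathrm{diag}(\beta_1^{Up},\dots,\beta_n^{Up})$. *)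

From HB Require Import structures.
From mathcomp Require Import all_boot all_order all_algebra.
From mathcomp Require Import all_classical all_reals all_analysis.
Set Implicit Arguments. Unset Strict Implicit. Unset Printing Implicit Defensive.
Import Order.TTheory GRing.Theory Num.Theory.
Import numFieldNormedType.Exports.
Local Open Scope classical_set_scope.
Local Open Scope ring_scope.

Section AF.
Variable R : realType.

Definition Cap (x : R) : R := ln (1 + x) / ln 2 / 2.

Definition sc (M : 'M[R]_1) : R := M 0 0.

Definition vnorm n (v : 'cV[R]_n) : R := Num.sqrt (sc (v^T *m v)).

(* A relay gain vector b : 'rV_n encodes B = diag(beta_k) = diag_mx b *)
Definition Wf n (h1 : 'cV[R]_n) (b : 'rV[R]_n) : R :=
  sc (h1^T *m diag_mx b *m diag_mx b *m h1).

Definition Amat n (PS1 PS2 : R) (h01 h02 : 'cV[R]_n) : 'M[R]_n :=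
  PS1 *: (h01 *m h01^T) + PS2 *: (h02 *m h02^T).

Definition rate_region n (PS1 PS2 : R) (h01 h02 h1 : 'cV[R]_n) (b : 'rV[R]_n)
  : set (R * R) :=
  [set p | [/\ 0 <= p.1, 0 <= p.2,
     p.1 <= Cap ((sc (h1^T *m diag_mx b *m h01)) ^+ 2 * PS1 / (Wf h1 b + 1)),
     p.2 <= Cap ((sc (h1^T *m diag_mx b *m h02)) ^+ 2 * PS2 / (Wf h1 b + 1)) &
     p.1 + p.2 <= Cap (sc (h1^T *m diag_mx b *m Amat PS1 PS2 h01 h02
                            *m diag_mx b *m h1) / (Wf h1 b + 1))]].

Definition bup n (PS1 PS2 : R) (PUp : 'I_n -> R) (h01 h02 : 'cV[R]_n) (k : 'I_n) : R :=
  Num.sqrt (PUp k / (1 + h01 k 0 ^+ 2 * PS1 + h02 k 0 ^+ 2 * PS2)).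

Definition feasible n (PS1 PS2 : R) (PUp : 'I_n -> R) (h01 h02 : 'cV[R]_n)
  (b : 'rV[R]_n) : Prop :=
  forall k, `|b 0 k| <= bup PS1 PS2 PUp h01 h02 k.

Definition conv_hull (S : set (R * R)) : set (R * R) :=
  [set p | exists m (w : 'I_m -> R) (x : 'I_m -> R * R),
     [/\ forall i, 0 <= w i, \sum_(i < m) w i = 1, forall i, S (x i) &
         p = (\sum_(i < m) w i * (x i).1, \sum_(i < m) w i * (x i).2)]].

Definition Ropt n (PS1 PS2 : R) (PUp : 'I_n -> R) (h01 h02 h1 : 'cV[R]_n)
  : set (R * R) :=
  closure (conv_hull (\bigcup_(b in feasible PS1 PS2 PUp h01 h02)
                        rate_region PS1 PS2 h01 h02 h1 b)).

Definition xth n (u1 u2 : 'cV[R]_n) (th : R) : 'cV[R]_n :=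
  cos th *: u1 + sin th *: u2.

Definition Bth n (PS1 PS2 : R) (PUp : 'I_n -> R) (h01 h02 h1 : 'cV[R]_n)
  (u1 u2 : 'cV[R]_n) (th : R) : 'rV[R]_n :=
  let x := xth u1 u2 th in
  let c := inf [set bup PS1 PS2 PUp h01 h02 k * h1 k 0 / `|x k 0|
                | k in [set k | x k 0 != 0]] in
  \row_k (c * x k 0 / h1 k 0).

Definition B2 n (PS1 PS2 : R) (PUp : 'I_n -> R) (h01 h02 : 'cV[R]_n) : 'rV[R]_n :=
  \row_k bup PS1 PS2 PUp h01 h02 k.

Definition maxR1 (Q : set (R * R)) : R := sup [set p.1 | p in Q].
Definition maxR2 (Q : set (R * R)) : R := sup [set p.2 | p in Q].
Definition maxRsum (Q : set (R * R)) : R := sup [set p.1 + p.2 | p in Q].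

End AF.

From mathcomp Require Import all_boot all_order all_algebra.
From mathcomp Require Import all_classical all_reals all_analysis.
From mathcomp.algebra_tactics Require Import ring lra.
Set Implicit Arguments.
Unset Strict Implicit.
Unset Printing Implicit Defensive.
Import Order.TTheory GRing.Theory Num.Theory.
Import numFieldNormedType.Exports.
Local Open Scope classical_set_scope.
Local Open Scope ring_scope.

(* Write [y = B h1] for the steered relay vector. The received signal powers are
   [PS_i (y . h0i)^2] and the noise power is [|y|^2 + 1], and each of the rate
   functionals [R1], [R2], [R1 + R2] is at most [Cap] of the corresponding SNR, with
   equality at a corner of the pentagon [R(B)]; since [Cap] is increasing and
   [Cap x - 1/2 <= Cap y] whenever [x <= 2 y], it suffices to find in [Q] a gain
   vector reaching half of an SNR bound valid for all feasible [B].
   (a) Projecting [y] onto [span (u1, u2)] (Bessel), the signal power is at most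
   [|y|^2 phi(ths)]: the quadratic form [P1 (x . x_al)^2 + P2 (x . x_be)^2] on unit
   vectors [x] is largest at an angle in [[al, be]] because [be - al <= pi/2]. So every
   SNR is at most [phi(ths)] (resp. [P1], [P2]), whereas [B_th] steers all power
   along [x_th] and reaches [W/(W+1) phi(th)], at least half the bound once [W >= 1].
   (b) With positive channels, full power [B^(2)] maximizes every coherent gain
   [y . h0i], so the signal powers of [B^(2)] bound those of any feasible [B], and
   dividing by [W(B^(2)) + 1 <= 2] costs at most a factor 2. *)

Section Capacity.
Variable R : realType.
Implicit Types x y : R.

Let k : R := (ln 2)^-1 / 2.

Let k_gt0 : 0 < k.
Proof. by rewrite /k divr_gt0 // invr_gt0 ln_gt0 //; lra. Qed.

Let CapE x : Cap x = ln (1 + x) * k.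
Proof. by rewrite /Cap mulrA. Qed.

Lemma ler_Cap x y : 0 <= x -> x <= y -> Cap x <= Cap y.
Proof. by move=> x_ge0 xy; rewrite !CapE ler_pM2r // ler_ln ?posrE; lra. Qed.

Lemma Cap_ge0 x : 0 <= x -> 0 <= Cap x.
Proof. by move/(ler_Cap (lexx 0)); rewrite [Cap 0]CapE addr0 ln1 mul0r. Qed.

Lemma ler_CapD x y : 0 <= x -> 0 <= y -> Cap (x + y) <= Cap x + Cap y.
Proof.
move=> x_ge0 y_ge0; rewrite !CapE -mulrDl ler_pM2r // -lnM ?posrE; try lra.
by rewrite ler_ln ?posrE; nra.
Qed.

Lemma ler_Cap_half x y : 0 <= x -> 0 <= y -> x <= 2 * y -> Cap x - 1 / 2 <= Cap y.
Proof.
move=> x_ge0 y_ge0 xy.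
have -> : 1 / 2 = ln 2 * k :> R by rewrite /k mulrA mulfV ?gt_eqF ?ln_gt0 //; lra.
rewrite !CapE -mulrBl ler_pM2r // lerBlDl -lnM ?posrE; try lra.
by rewrite ler_ln ?posrE; lra.
Qed.

End Capacity.

Section DotProduct.
Variables (R : realType) (n : nat).
Implicit Types (u v w : 'cV[R]_n) (a : R).

Definition dotv u v : R := sc (u^T *m v).

Lemma dotvE u v : dotv u v = \sum_k u k 0 * v k 0.
Proof. by rewrite /dotv /sc mxE; apply: eq_bigr => k _; rewrite mxE. Qed.

Lemma dotvC u v : dotv u v = dotv v u.
Proof. by rewrite !dotvE; apply: eq_bigr => k _; rewrite mulrC. Qed.

Lemma dotvDr u v w : dotv u (v + w) = dotv u v + dotv u w.
Proof. by rewrite /dotv /sc mulmxDr mxE. Qed.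

Lemma dotvZr a u v : dotv u (a *: v) = a * dotv u v.
Proof. by rewrite /dotv /sc -scalemxAr mxE. Qed.

Lemma dotvNr u v : dotv u (- v) = - dotv u v.
Proof. by rewrite -scaleN1r dotvZr mulN1r. Qed.

Lemma dotvDl u v w : dotv (u + v) w = dotv u w + dotv v w.
Proof. by rewrite dotvC dotvDr !(dotvC w). Qed.

Lemma dotvZl a u v : dotv (a *: u) v = a * dotv u v.
Proof. by rewrite dotvC dotvZr dotvC. Qed.

Lemma dotvNl u v : dotv (- u) v = - dotv u v.
Proof. by rewrite dotvC dotvNr dotvC. Qed.

Lemma dotvv_ge0 u : 0 <= dotv u u.
Proof. by rewrite dotvE sumr_ge0 // => k _; rewrite -expr2 sqr_ge0. Qed.

Lemma dotv_xth u u1 u2 a : dotv u (xth u1 u2 a) = cos a * dotv u u1 + sin a * dotv u u2.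
Proof. by rewrite dotvDr !dotvZr. Qed.

Section Orthonormal.
Variables u1 u2 : 'cV[R]_n.
Hypotheses (u11 : dotv u1 u1 = 1) (u22 : dotv u2 u2 = 1) (u12 : dotv u1 u2 = 0).

Lemma dotv_xth_xth a b : dotv (xth u1 u2 a) (xth u1 u2 b) = cos (a - b).
Proof.
rewrite dotv_xth !(dotvC (xth u1 u2 a)) !dotv_xth u11 u22 u12 (dotvC u2 u1) u12 cosB.
ring.
Qed.

Lemma bessel2 y : dotv y u1 ^+ 2 + dotv y u2 ^+ 2 <= dotv y y.
Proof.
set p := dotv y u1; set q := dotv y u2.
have := dotvv_ge0 (y - (p *: u1 + q *: u2)).
rewrite !(dotvDl, dotvDr, dotvNl, dotvNr, dotvZl, dotvZr) !(dotvC _ y) -/p -/q.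
by rewrite u11 u22 u12 (dotvC u2 u1) u12; nra.
Qed.

End Orthonormal.
End DotProduct.

Section Steering.
Variables (R : realType) (n : nat).
Implicit Types (v : 'cV[R]_n) (b : 'rV[R]_n).

Definition steer (h1 : 'cV[R]_n) b : 'cV[R]_n := diag_mx b *m h1.

Lemma steer_coord (h1 : 'cV[R]_n) b k : steer h1 b k 0 = b 0 k * h1 k 0.
Proof. by rewrite /steer mul_diag_mx mxE. Qed.

Lemma tr_steer (h1 : 'cV[R]_n) b : (steer h1 b)^T = h1^T *m diag_mx b.
Proof. by rewrite /steer trmx_mul tr_diag_mx. Qed.

Lemma sc_steer (h1 : 'cV[R]_n) b v : sc (h1^T *m diag_mx b *m v) = dotv (steer h1 b) v.
Proof. by rewrite /dotv tr_steer. Qed.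

Lemma Wf_steer (h1 : 'cV[R]_n) b : Wf h1 b = dotv (steer h1 b) (steer h1 b).
Proof. by rewrite /Wf -mulmxA sc_steer. Qed.

Lemma sc_Amat_steer (PS1 PS2 : R) (h01 h02 h1 : 'cV[R]_n) b :
  sc (h1^T *m diag_mx b *m Amat PS1 PS2 h01 h02 *m diag_mx b *m h1) =
  dotv (steer h1 b) h01 ^+ 2 * PS1 + dotv (steer h1 b) h02 ^+ 2 * PS2.
Proof.
rewrite -tr_steer -mulmxA -[diag_mx b *m h1]/(steer h1 b); move: (steer h1 b) => y.
have trM v : v^T *m y = (y^T *m v)^T by rewrite trmx_mul trmxK.
rewrite /Amat mulmxDr mulmxDl -!scalemxAr -!scalemxAl !mulmxA.
rewrite -[y^T *m h01 *m h01^T *m y]mulmxA -[y^T *m h02 *m h02^T *m y]mulmxA !trM.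
by rewrite /dotv /sc !mxE !big_ord1 !mxE; ring.
Qed.

End Steering.

Section PlanarBeam.
Variable R : realType.
Implicit Types (c s p q t : R).

Lemma sqr_le_norm_le (x y : R) : `|x| <= y -> x ^+ 2 <= y ^+ 2.
Proof.
move=> xy; rewrite -real_normK ?num_real //.
by rewrite lerXn2r // ?nnegrE (le_trans _ xy).
Qed.

Lemma polar_quadrant c s : 0 <= c -> 0 <= s ->
  exists r t, [/\ 0 <= t <= pi / 2, c = r * cos t & s = r * sin t].
Proof.
move=> c_ge0 s_ge0; have pi_gt0 := pi_gt0 R.
pose r : R := Num.sqrt (c ^+ 2 + s ^+ 2).
have r2 : r ^+ 2 = c ^+ 2 + s ^+ 2 by rewrite sqr_sqrtr // addr_ge0 ?sqr_ge0.
have [r0|r_neq0] := eqVneq r 0.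
  have [c0 s0] : c = 0 /\ s = 0 by move: r2; rewrite r0; nra.
  by exists 0, 0; rewrite c0 s0 !mul0r; split => //; lra.
have r_gt0 : 0 < r by rewrite lt_def r_neq0 sqrtr_ge0.
have cr_ge0 : 0 <= c / r by rewrite divr_ge0 // ltW.
have cr_le1 : c / r <= 1.
  rewrite ler_pdivrMr // mul1r -[c]ger0_norm // -sqrtr_sqr.
  by apply: ler_wsqrtr; rewrite lerDl sqr_ge0.
have cr_itv : -1 <= c / r <= 1 by apply/andP; split; lra.
exists r, (acos (c / r)); split.
- rewrite acos_ge0 //= leNgt; apply/negP => lt_pi2.
  have : cos (acos (c / r)) < cos (pi / 2).
    by rewrite ltr_cos // in_itv /= ?acos_ge0 ?acos_lepi //=; lra.
  by rewrite acosK ?in_itv // cos_pihalf; lra.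
- by rewrite acosK ?in_itv // mulrC divfK ?gt_eqF.
- rewrite sin_acos //.
  have -> : 1 - (c / r) ^+ 2 = (s / r) ^+ 2.
    by rewrite !expr_div_n r2; field; rewrite -r2 sqrf_eq0 gt_eqF.
  by rewrite sqrtr_sqr ger0_norm ?divr_ge0 ?(ltW r_gt0) // mulrC divfK ?gt_eqF.
Qed.

Lemma cos_sqr_le1 t : cos t ^+ 2 <= 1.
Proof. by have := cos2Dsin2 t; have := sqr_ge0 (sin t); lra. Qed.

Definition beam_power (P1 P2 al be th : R) : R :=
  P1 * cos (th - al) ^+ 2 + P2 * cos (th - be) ^+ 2.

Section BeamMaximum.
Variables P1 P2 al be ths : R.
Hypotheses (P1_ge0 : 0 <= P1) (P2_ge0 : 0 <= P2).
Hypotheses (al_le_be : al <= be) (be_le : be <= al + pi / 2).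
Hypothesis ths_max :
  forall th, al <= th -> th <= be -> beam_power P1 P2 al be th <= beam_power P1 P2 al be ths.

(* Past [be], [cos t] keeps decreasing and the second term is at most [P2], so the
   beam power stays below its value at [be]. *)
Lemma beam_power_quarter_le t : 0 <= t <= pi / 2 ->
  beam_power P1 P2 al be (al + t) <= beam_power P1 P2 al be ths.
Proof.
(* [lra] does not use section hypotheses, hence the local copies. *)
move=> /andP[t_ge0 t_le]; have pi_gt0 := pi_gt0 R; have := al_le_be; have := be_le => ? ?.
have [t_le_d|d_lt_t] := leP t (be - al); first by apply: ths_max; lra.
apply: le_trans (ths_max al_le_be (lexx be)).
rewrite /beam_power addrAC subrr add0r subrr cos0 expr1n mulr1.
have t_in : t \in `[0, pi] by rewrite in_itv /=; apply/andP; split; lra.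
have d_in : be - al \in `[0, pi] by rewrite in_itv /=; apply/andP; split; lra.
have cos_le : cos t ^+ 2 <= cos (be - al) ^+ 2.
  rewrite ler_sqr ?nnegrE ?cos_ge0_pihalf //; try (apply/andP; split; lra).
  by rewrite ltW // (ltr_cos d_in t_in).
by rewrite lerD ?ler_wpM2l // -[leRHS]mulr1 ler_wpM2l ?cos_sqr_le1.
Qed.

Lemma quad_le_beam_power p q :
  P1 * (cos al * p + sin al * q) ^+ 2 + P2 * (cos be * p + sin be * q) ^+ 2 <=
  (p ^+ 2 + q ^+ 2) * beam_power P1 P2 al be ths.
Proof.
have pi_gt0 := pi_gt0 R; have := al_le_be; have := be_le => ? ?.
set d := be - al; set c := cos al * p + sin al * q; set s := cos al * q - sin al * p.
have cs_al := cos2Dsin2 al.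
have rot_be : cos be * p + sin be * q = c * cos d + s * sin d.
  rewrite /c /s /d cosB sinB -[LHS]mulr1 -cs_al; ring.
have rot_norm : p ^+ 2 + q ^+ 2 = c ^+ 2 + s ^+ 2.
  rewrite /c /s -[LHS]mulr1 -cs_al; ring.
have cd_ge0 : 0 <= cos d by apply: cos_ge0_pihalf; rewrite /d; lra.
have sd_ge0 : 0 <= sin d by apply: sin_ge0_pi; rewrite /d; lra.
have [r [t [t_itv cE sE]]] := polar_quadrant (normr_ge0 c) (normr_ge0 s).
have r2 : r ^+ 2 = p ^+ 2 + q ^+ 2.
  rewrite rot_norm -(real_normK (num_real c)) -(real_normK (num_real s)) cE sE.
  by rewrite !exprMn -mulrDr cos2Dsin2 mulr1.
have c2 : c ^+ 2 = r ^+ 2 * cos t ^+ 2 by rewrite -real_normK ?num_real // cE exprMn.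
have s2 : (c * cos d + s * sin d) ^+ 2 <= r ^+ 2 * cos (t - d) ^+ 2.
  rewrite -exprMn; apply: sqr_le_norm_le; apply: (le_trans (ler_normD _ _)).
  by rewrite !normrM (ger0_norm cd_ge0) (ger0_norm sd_ge0) cE sE cosB mulrDr !mulrA.
have le_max := beam_power_quarter_le t_itv.
rewrite /beam_power addrAC subrr add0r (_ : al + t - be = t - d) in le_max; last first.
  by rewrite /d; ring.
rewrite rot_be c2 -r2.
apply: le_trans (_ : r ^+ 2 * (P1 * cos t ^+ 2 + P2 * cos (t - d) ^+ 2) <= _).
  rewrite mulrDr; apply: lerD; rewrite [leRHS]mulrCA //.
  exact: ler_wpM2l.
by rewrite ler_wpM2l ?sqr_ge0.
Qed.

End BeamMaximum.
End PlanarBeam.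

Section ConvexHull.
Variable R : realType.
Implicit Types S : set (R * R).

Lemma subset_closure_conv_hull S : S `<=` closure (conv_hull S).
Proof.
move=> p Sp; apply: subset_closure; exists 1%N, (fun=> 1), (fun=> p).
by split=> [i||//|]; rewrite ?big_ord1 ?mul1r //; case: p {Sp}.
Qed.

Lemma closure_conv_hull_le S (k1 k2 M : R) :
  (forall p, S p -> k1 * p.1 + k2 * p.2 <= M) ->
  forall p, closure (conv_hull S) p -> k1 * p.1 + k2 * p.2 <= M.
Proof.
move=> S_le; set H := [set p : R * R | k1 * p.1 + k2 * p.2 <= M].
have H_closed : closed H.
  apply: (@preimage_closed _ _ (fun p : R * R => k1 * p.1 + k2 * p.2) [set x | x <= M]);
    last exact: closed_le.
  by move=> p _; apply: cvgD; apply: cvgMr; [exact: cvg_fst | exact: cvg_snd].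
have hull_sub : conv_hull S `<=` H.
  move=> _ [m [w [x [w_ge0 w_sum Sx ->]]]]; rewrite /H /= !mulr_sumr -big_split /=.
  rewrite -[M]mul1r -w_sum mulr_suml; apply: ler_sum => i _.
  by rewrite mulrCA [k2 * _]mulrCA -mulrDr ler_wpM2l ?S_le.
by move=> p; rewrite closureE => /(smallest_sub H_closed hull_sub).
Qed.

End ConvexHull.

Inductive objective := Rate1 | Rate2 | SumRate.

Section Objectives.
Variable R : realType.
Implicit Types (o : objective) (p : R * R) (Q : set (R * R)).

Definition objective_weights o : R * R :=
  match o with Rate1 => (1, 0) | Rate2 => (0, 1) | SumRate => (1, 1) end.

Definition objval o p : R :=
  match o with Rate1 => p.1 | Rate2 => p.2 | SumRate => p.1 + p.2 end.

Definition maxobj o Q : R := sup [set objval o p | p in Q].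

Lemma objvalE o p : objval o p = (objective_weights o).1 * p.1 + (objective_weights o).2 * p.2.
Proof. by case: o => /=; ring. Qed.

Lemma objective_weights_ge0 o : 0 <= (objective_weights o).1 /\ 0 <= (objective_weights o).2.
Proof. by case: o => /=; split. Qed.

Lemma closure_conv_hull_objval_le o S (M : R) :
  (forall p, S p -> objval o p <= M) -> forall p, closure (conv_hull S) p -> objval o p <= M.
Proof.
move=> S_le p; rewrite objvalE; apply: closure_conv_hull_le => q Sq.
by rewrite -objvalE S_le.
Qed.

End Objectives.

Section RateRegion.
Variables (R : realType) (n : nat) (PS1 PS2 : R) (h01 h02 h1 : 'cV[R]_n).
Hypotheses (PS1_ge0 : 0 <= PS1) (PS2_ge0 : 0 <= PS2).
Implicit Types (o : objective) (b : 'rV[R]_n) (p : R * R).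

Local Notation RR := (rate_region PS1 PS2 h01 h02 h1).

Definition rx_power (PS : R) (v : 'cV[R]_n) b : R := dotv (steer h1 b) v ^+ 2 * PS.

Definition objnum o b : R :=
  (objective_weights R o).1 * rx_power PS1 h01 b + (objective_weights R o).2 * rx_power PS2 h02 b.

Definition objsnr o b : R := objnum o b / (Wf h1 b + 1).

Lemma Wf_ge0 b : 0 <= Wf h1 b.
Proof. by rewrite Wf_steer dotvv_ge0. Qed.

Lemma objnum_ge0 o b : 0 <= objnum o b.
Proof.
have [w1 w2] := objective_weights_ge0 R o.
by rewrite addr_ge0 // mulr_ge0 // mulr_ge0 // sqr_ge0.
Qed.

Lemma objsnr_ge0 o b : 0 <= objsnr o b.
Proof. by rewrite divr_ge0 ?objnum_ge0 // addr_ge0 ?Wf_ge0. Qed.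

Lemma objsnr_le_objnum o b : objsnr o b <= objnum o b.
Proof.
rewrite ler_pdivrMr; last by rewrite ltr_wpDl ?Wf_ge0.
by rewrite ler_peMr ?objnum_ge0 // lerDr Wf_ge0.
Qed.

Lemma objnum_le_double_objsnr o b : Wf h1 b <= 1 -> objnum o b <= 2 * objsnr o b.
Proof.
move=> W_le1; rewrite mulrA ler_pdivlMr; last by rewrite ltr_wpDl ?Wf_ge0.
by rewrite mulrC ler_wpM2r ?objnum_ge0 //; lra.
Qed.

Lemma rate_regionE b p :
  RR b p <-> [/\ 0 <= p.1, 0 <= p.2 & forall o, objval o p <= Cap (objsnr o b)].
Proof.
rewrite /rate_region /= sc_Amat_steer !sc_steer /objsnr /objnum /rx_power /=.
split=> [[p1 p2 le1 le2 le12]|[p1 p2 le]].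
  by split=> // -[] /=; rewrite ?mul1r ?mul0r ?addr0 ?add0r.
split=> //; [move: (le Rate1) | move: (le Rate2) | move: (le SumRate)];
  by rewrite /= ?mul1r ?mul0r ?addr0 ?add0r.
Qed.

Lemma objval_le_Cap o b p : RR b p -> objval o p <= Cap (objsnr o b).
Proof. by case/rate_regionE. Qed.

Lemma rate_region_corner o b : exists2 p, RR b p & objval o p = Cap (objsnr o b).
Proof.
have X1 := objsnr_ge0 Rate1 b; have X2 := objsnr_ge0 Rate2 b.
have X12E : objsnr SumRate b = objsnr Rate1 b + objsnr Rate2 b.
  by rewrite /objsnr /objnum /= !mul1r !mul0r addr0 add0r mulrDl.
have C1 := Cap_ge0 X1; have C2 := Cap_ge0 X2.
have C1_le : Cap (objsnr Rate1 b) <= Cap (objsnr SumRate b) by rewrite ler_Cap // X12E lerDl.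
have C2_le : Cap (objsnr Rate2 b) <= Cap (objsnr SumRate b) by rewrite ler_Cap // X12E lerDr.
have C12 : Cap (objsnr SumRate b) <= Cap (objsnr Rate1 b) + Cap (objsnr Rate2 b).
  by rewrite X12E ler_CapD.
case: o.
- by exists (Cap (objsnr Rate1 b), 0) => //; apply/rate_regionE; split=> // -[] /=; lra.
- by exists (0, Cap (objsnr Rate2 b)) => //; apply/rate_regionE; split=> // -[] /=; lra.
- exists (Cap (objsnr Rate1 b), Cap (objsnr SumRate b) - Cap (objsnr Rate1 b)); last first.
    by rewrite /= addrC subrK.
  by apply/rate_regionE; split=> /= [||[] /=]; lra.
Qed.

End RateRegion.

Lemma feasible0 (R : realType) (n : nat) (PS1 PS2 : R) PUp (h01 h02 : 'cV[R]_n) :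
  feasible PS1 PS2 PUp h01 h02 0.
Proof. by move=> k; rewrite mxE normr0 sqrtr_ge0. Qed.

Section OptimalRegion.
Variables (R : realType) (n : nat) (PS1 PS2 : R) (PUp : 'I_n -> R) (h01 h02 h1 : 'cV[R]_n).
Hypotheses (PS1_ge0 : 0 <= PS1) (PS2_ge0 : 0 <= PS2).
Implicit Types (o : objective) (b : 'rV[R]_n) (p : R * R) (Q : set (R * R)).

Local Notation RR := (rate_region PS1 PS2 h01 h02 h1).
Local Notation snr := (objsnr PS1 PS2 h01 h02 h1).
Local Notation feasible := (feasible PS1 PS2 PUp h01 h02).
Local Notation Ro := (Ropt PS1 PS2 PUp h01 h02 h1).

Let snr_ge0 := objsnr_ge0 h01 h02 h1 PS1_ge0 PS2_ge0.
Let corner := rate_region_corner h01 h02 h1 PS1_ge0 PS2_ge0.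

Lemma maxobj_Ropt_le o Y : (forall b, feasible b -> snr o b <= Y) -> maxobj o Ro <= Cap Y.
Proof.
move=> snr_le; apply: ge_sup.
  have [p RRp _] := corner o 0.
  exists (objval o p), p => //; apply: subset_closure_conv_hull.
  by exists 0 => //; exact: feasible0.
move=> _ [p Ro_p <-]; apply: closure_conv_hull_objval_le Ro_p => q [b Fb RRq].
by apply: le_trans (objval_le_Cap o RRq) _; rewrite ler_Cap ?snr_le.
Qed.

Lemma Cap_le_maxobj o Q b M :
  RR b `<=` Q -> (forall p, Q p -> objval o p <= M) -> Cap (snr o b) <= maxobj o Q.
Proof.
move=> RR_Q Q_le; have [p RRp <-] := corner o b.
apply: ub_le_sup; last by exists p => //; exact: RR_Q.
by exists M => _ [q Qq <-]; exact: Q_le.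
Qed.

Lemma maxobj_gap o Q b0 Y M :
  (forall b, feasible b -> snr o b <= Y) -> Y <= 2 * snr o b0 ->
  RR b0 `<=` Q -> (forall p, Q p -> objval o p <= M) ->
  maxobj o Ro - 1 / 2 <= maxobj o Q.
Proof.
move=> snr_le Y_le RR_Q Q_le.
have Y_ge0 : 0 <= Y := le_trans (snr_ge0 _ _) (snr_le _ (feasible0 _ _ _ _ _)).
apply: le_trans (Cap_le_maxobj RR_Q Q_le).
apply: le_trans (ler_Cap_half Y_ge0 (snr_ge0 _ _) Y_le).
by rewrite lerD2r maxobj_Ropt_le.
Qed.

End OptimalRegion.

Section LowerLayerNoise.
Variables (R : realType) (n : nat) (PS1 PS2 : R) (PUp : 'I_n -> R) (h01 h02 h1 : 'cV[R]_n).
Hypotheses (PS1_ge0 : 0 <= PS1) (PS2_ge0 : 0 <= PS2).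
Hypotheses (h01_gt0 : forall k, 0 < h01 k 0) (h02_gt0 : forall k, 0 < h02 k 0).
Hypothesis h1_gt0 : forall k, 0 < h1 k 0.
Implicit Types (o : objective) (v : 'cV[R]_n) (b : 'rV[R]_n).

Local Notation feasible := (feasible PS1 PS2 PUp h01 h02).
Local Notation Bup := (B2 PS1 PS2 PUp h01 h02).
Local Notation num := (objnum PS1 PS2 h01 h02 h1).

Lemma dotv_steer_le_Bup v b : (forall k, 0 < v k 0) -> feasible b ->
  `|dotv (steer h1 b) v| <= dotv (steer h1 Bup) v.
Proof.
move=> v_gt0 Fb; rewrite !dotvE; apply: le_trans (ler_norm_sum _ _ _) _.
apply: ler_sum => k _; rewrite !steer_coord mxE !normrM.
rewrite (gtr0_norm (h1_gt0 k)) (gtr0_norm (v_gt0 k)).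
by rewrite ler_wpM2r ?(ltW (v_gt0 k)) // ler_wpM2r ?(ltW (h1_gt0 k)).
Qed.

Lemma rx_power_le_Bup (PS : R) v b : 0 <= PS -> (forall k, 0 < v k 0) -> feasible b ->
  rx_power h1 PS v b <= rx_power h1 PS v Bup.
Proof. by move=> PS_ge0 v_gt0 Fb; rewrite ler_wpM2r // sqr_le_norm_le // dotv_steer_le_Bup. Qed.

Lemma objnum_le_Bup o b : feasible b -> num o b <= num o Bup.
Proof.
move=> Fb; have [w1 w2] := objective_weights_ge0 R o.
by rewrite lerD // ler_wpM2l // rx_power_le_Bup.
Qed.

Lemma maxobj_gap_lower o : Wf h1 Bup <= 1 ->
  maxobj o (Ropt PS1 PS2 PUp h01 h02 h1) - 1 / 2 <= maxobj o (rate_region PS1 PS2 h01 h02 h1 Bup).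
Proof.
move=> W_le1.
apply: (maxobj_gap PS1_ge0 PS2_ge0 (Y := num o Bup) (M := Cap (objsnr PS1 PS2 h01 h02 h1 o Bup))).
- by move=> b Fb; apply: le_trans (objsnr_le_objnum _ _ _ _ _ _ _) (objnum_le_Bup o Fb).
- exact: objnum_le_double_objsnr.
- by [].
- by move=> p; exact: objval_le_Cap.
Qed.

End LowerLayerNoise.

Section UpperLayerNoise.
Variables (R : realType) (n : nat) (PS1 PS2 : R) (PUp : 'I_n -> R) (h01 h02 h1 : 'cV[R]_n).
Variables (u1 u2 : 'cV[R]_n) (al be ths : R).
Hypotheses (PS1_ge0 : 0 <= PS1) (PS2_ge0 : 0 <= PS2) (h1_gt0 : forall k, 0 < h1 k 0).
Hypotheses (u11 : dotv u1 u1 = 1) (u22 : dotv u2 u2 = 1) (u12 : dotv u1 u2 = 0).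
Hypotheses (al_le_be : al <= be) (be_le : be <= al + pi / 2).
Hypotheses (h01E : h01 = vnorm h01 *: xth u1 u2 al) (h02E : h02 = vnorm h02 *: xth u1 u2 be).

Local Notation P1 := (vnorm h01 ^+ 2 * PS1).
Local Notation P2 := (vnorm h02 ^+ 2 * PS2).

Hypothesis ths_max : forall th, al <= th -> th <= be ->
  beam_power P1 P2 al be th <= beam_power P1 P2 al be ths.

Implicit Types (o : objective) (b : 'rV[R]_n) (th : R).

Let P1_ge0 : 0 <= P1. Proof. by rewrite mulr_ge0 ?sqr_ge0. Qed.
Let P2_ge0 : 0 <= P2. Proof. by rewrite mulr_ge0 ?sqr_ge0. Qed.

Local Notation num := (objnum PS1 PS2 h01 h02 h1).
Local Notation snr := (objsnr PS1 PS2 h01 h02 h1).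
Local Notation Bth := (Bth PS1 PS2 PUp h01 h02 h1 u1 u2).

Definition objangle o : R := match o with Rate1 => al | Rate2 => be | SumRate => ths end.

Definition objphi o th : R :=
  beam_power ((objective_weights R o).1 * P1) ((objective_weights R o).2 * P2) al be th.

Lemma objphi_ge0 o th : 0 <= objphi o th.
Proof.
have [w1 w2] := objective_weights_ge0 R o.
by apply: addr_ge0; apply: mulr_ge0; rewrite ?sqr_ge0 // mulr_ge0.
Qed.

Lemma objangle_max o th : al <= th -> th <= be -> objphi o th <= objphi o (objangle o).
Proof.
rewrite /objphi /beam_power; case: o => /= al_th th_be.
- by rewrite subrr cos0 expr1n !mul0r !addr0 mul1r ler_wpM2l ?cos_sqr_le1.
- by rewrite subrr cos0 expr1n !mul0r !add0r mul1r ler_wpM2l ?cos_sqr_le1.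
- by rewrite !mul1r ths_max.
Qed.

Let dotv_h01 v : dotv v h01 = vnorm h01 * dotv v (xth u1 u2 al).
Proof. by rewrite {1}h01E dotvZr. Qed.

Let dotv_h02 v : dotv v h02 = vnorm h02 * dotv v (xth u1 u2 be).
Proof. by rewrite {1}h02E dotvZr. Qed.

Lemma objnum_le_Wf_objphi o b : num o b <= Wf h1 b * objphi o (objangle o).
Proof.
have [w1 w2] := objective_weights_ge0 R o.
rewrite Wf_steer /objnum /rx_power !(dotv_h01, dotv_h02) !dotv_xth.
set p := dotv _ u1; set q := dotv _ u2.
have := quad_le_beam_power (mulr_ge0 w1 P1_ge0) (mulr_ge0 w2 P2_ge0) al_le_be be_le
  (objangle_max o) p q.
rewrite -/(objphi o _) => le_phi.
apply: le_trans (_ : (p ^+ 2 + q ^+ 2) * objphi o (objangle o) <= _).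
  apply: le_trans le_phi; rewrite le_eqVlt; apply/orP; left; apply/eqP; ring.
by rewrite ler_wpM2r ?objphi_ge0 ?bessel2.
Qed.

Lemma objsnr_le_objphi o b : snr o b <= objphi o (objangle o).
Proof.
have W_ge0 := Wf_ge0 h1 b; have phi_ge0 := objphi_ge0 o (objangle o).
rewrite ler_pdivrMr; last by rewrite ltr_wpDl.
by apply: le_trans (objnum_le_Wf_objphi o b) _; rewrite mulrC ler_wpM2l // lerDl.
Qed.

Lemma steer_Bth th : exists c, steer h1 (Bth th) = c *: xth u1 u2 th.
Proof.
rewrite /Bth; set c := inf _; exists c; apply/matrixP => k j; rewrite ord1.
by rewrite steer_coord !mxE; field; exact: lt0r_neq0.
Qed.

Lemma objnum_Bth o th : num o (Bth th) = Wf h1 (Bth th) * objphi o th.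
Proof.
rewrite Wf_steer /objnum /rx_power !(dotv_h01, dotv_h02); have [c ->] := steer_Bth th.
rewrite dotvZl dotvZr !dotvZl !dotv_xth_xth // subrr cos0 /objphi /beam_power.
ring.
Qed.

Lemma maxobj_gap_upper o : (forall o', 1 <= Wf h1 (Bth (objangle o'))) ->
  maxobj o (Ropt PS1 PS2 PUp h01 h02 h1) - 1 / 2 <=
  maxobj o (closure (conv_hull (rate_region PS1 PS2 h01 h02 h1 (Bth ths)
     `|` rate_region PS1 PS2 h01 h02 h1 (Bth al) `|` rate_region PS1 PS2 h01 h02 h1 (Bth be)))).
Proof.
move=> W_ge1; set Y := objphi o (objangle o).
apply: (maxobj_gap PS1_ge0 PS2_ge0 (b0 := Bth (objangle o)) (Y := Y) (M := Cap Y)).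
- by move=> b _; exact: objsnr_le_objphi.
- have := W_ge1 o; set W := Wf h1 _ => W1; have Y_ge0 : 0 <= Y := objphi_ge0 _ _.
  rewrite /objsnr objnum_Bth -/W mulrA ler_pdivlMr; last by lra.
  by rewrite -/Y; nra.
- by move=> p RRp; apply: subset_closure_conv_hull; case: o {Y} RRp => RRp; [left; right | right | left; left].
- apply: closure_conv_hull_objval_le => p [[]|] RRp;
  by apply: le_trans (objval_le_Cap o RRp) _; rewrite ler_Cap ?objsnr_ge0 ?objsnr_le_objphi.
Qed.

End UpperLayerNoise.

Theorem theorem6 (R : realType) (n : nat)
  (PS1 PS2 : R) (PUp : 'I_n -> R) (h01 h02 h1 : 'cV[R]_n)
  (u1 u2 : 'cV[R]_n) (al be ths : R) :
  0 < PS1 -> 0 < PS2 ->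
  (forall k, 0 < PUp k) ->
  (forall k, 0 < h01 k 0) -> (forall k, 0 < h02 k 0) -> (forall k, 0 < h1 k 0) ->
  sc (u1^T *m u1) = 1 -> sc (u2^T *m u2) = 1 -> sc (u1^T *m u2) = 0 ->
  0 <= al -> al <= be -> be <= pi / 2 ->
  h01 = vnorm h01 *: xth u1 u2 al ->
  h02 = vnorm h02 *: xth u1 u2 be ->
  let P1 := vnorm h01 ^+ 2 * PS1 in
  let P2 := vnorm h02 ^+ 2 * PS2 in
  let phi := fun th : R => P1 * cos (th - al) ^+ 2 + P2 * cos (th - be) ^+ 2 in
  al <= ths -> ths <= be ->
  (forall th, al <= th -> th <= be -> phi th <= phi ths) ->
  let B10 := Bth PS1 PS2 PUp h01 h02 h1 u1 u2 ths in
  let B11 := Bth PS1 PS2 PUp h01 h02 h1 u1 u2 al in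
  let B12 := Bth PS1 PS2 PUp h01 h02 h1 u1 u2 be in
  let Bt2 := B2 PS1 PS2 PUp h01 h02 in
  let W := Wf h1 in
  let RR := rate_region PS1 PS2 h01 h02 h1 in
  let Ro := Ropt PS1 PS2 PUp h01 h02 h1 in
  ((forall B1, B1 \in [:: B10; B11; B12] -> W B1 <= W Bt2 /\ 1 <= W B1) ->
   let Q := closure (conv_hull (RR B10 `|` RR B11 `|` RR B12)) in
   [/\ maxR1 Q >= maxR1 Ro - 1 / 2,
       maxR2 Q >= maxR2 Ro - 1 / 2 &
       maxRsum Q >= maxRsum Ro - 1 / 2])
  /\
  ((forall B1, B1 \in [:: B10; B11; B12] -> W B1 <= W Bt2 /\ W Bt2 <= 1) ->
   let Q := RR Bt2 in
   [/\ maxR1 Q >= maxR1 Ro - 1 / 2,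
       maxR2 Q >= maxR2 Ro - 1 / 2 &
       maxRsum Q >= maxRsum Ro - 1 / 2]).
Proof.
move=> PS1_gt0 PS2_gt0 _ h01_gt0 h02_gt0 h1_gt0 u11 u22 u12 al_ge0 al_le_be be_le_pi2
  h01E h02E P1 P2 phi _ _ ths_max B10 B11 B12 Bt2 W RR Ro.
have PS1_ge0 := ltW PS1_gt0; have PS2_ge0 := ltW PS2_gt0.
have be_le : be <= al + pi / 2 by lra.
split=> [HW Q | HW Q].
- have gap := maxobj_gap_upper (PUp := PUp) PS1_ge0 PS2_ge0 h1_gt0 u11 u22 u12 al_le_be be_le
    h01E h02E ths_max.
  have W_ge1 o : 1 <= W (Bth PS1 PS2 PUp h01 h02 h1 u1 u2 (objangle al be ths o)).
    by case: o; [apply: (HW B11 _).2 | apply: (HW B12 _).2 | apply: (HW B10 _).2];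
      rewrite !inE eqxx ?orbT.
  by split; [exact: gap Rate1 W_ge1 | exact: gap Rate2 W_ge1 | exact: gap SumRate W_ge1].
- have W_le1 : W Bt2 <= 1 by apply: (HW B10 _).2; rewrite inE eqxx.
  have gap o := maxobj_gap_lower (PUp := PUp) PS1_ge0 PS2_ge0 h01_gt0 h02_gt0 h1_gt0 o W_le1.
  by split; [exact: gap Rate1 | exact: gap Rate2 | exact: gap SumRate].
Qed.
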